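(* Let $R$ be a ring with identity and involution $*$, and let $a,b\in R$ be dual core invertible with dual core inverses $a_{\oplus}$ and $b_{\oplus}$. If $ab=0$ and $ab^*=0$, then $a+b$ is dual core invertible and $$(a+b)_{\oplus}=a_{\oplus}+b_{\oplus}a^{\pi},$$ where $a^{\pi}=1-aa_{\oplus}$.
   Context: An involution on $R$ satisfies $(a^* )^*=a$, $(ab)^*=b^*a^*$, $(a+b)^*=a^*+b^*$. An element $x\in R$ is a dual core inverse of $a$ if $axa=a$, $xR=a^*R$ and $Rx=Ra$; it is unique when it exists and is denoted $a_{\oplus}$. *)

From HB Require Import structures.
From mathcomp Require Import all_boot all_order all_algebra.
Set Implicit Arguments. Unset Strict Implicit. Unset Printing Implicit Defensive.
Import GRing.Theory.
Local Open Scope ring_scope.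

Definition is_involution (R : pzRingType) (star : R -> R) : Prop :=
  [/\ forall a, star (star a) = a,
      forall a b, star (a * b) = star b * star a &
      forall a b, star (a + b) = star a + star b].

Definition rideal_eq (R : pzRingType) (x y : R) : Prop :=
  forall z : R, (exists r, z = x * r) <-> (exists r, z = y * r).

Definition lideal_eq (R : pzRingType) (x y : R) : Prop :=
  forall z : R, (exists r, z = r * x) <-> (exists r, z = r * y).

Definition is_dual_core_inverse (R : pzRingType) (star : R -> R) (a x : R) : Prop :=
  [/\ a * x * a = a, rideal_eq x (star a) & lideal_eq x a].

From mathcomp Require Import all_boot all_order all_algebra.
Local Open Scope ring_scope.
Import GRing.Theory.

(* A dual core inverse x of a is exactly a solution of the five equations
   axa = a, xax = x, (xa)^* = xa, aax = a, xxa = x.  The hypotheses ab = 0 and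
   ab^* = 0 make a_+ b, a b_+, b a_+ and the products between a_+ and b_+
   vanish, so with z = a_+ + b_+ a^pi the cross terms drop out of
   z(a+b) = a_+ a + b_+ b and (a+b)z = a a_+ + b b_+ a^pi, and the five
   equations for (a+b, z) follow from those for (a, a_+) and (b, b_+). *)

Section DualCoreInverse.

Context {R : pzRingType} {star : R -> R}.
Hypothesis Hstar : is_involution star.

Lemma involution0 : star 0 = 0.
Proof.
by case: Hstar => _ _ starD; apply: (@addrI _ (star 0)); rewrite -starD !addr0.
Qed.

Section Equations.

Context {a x : R}.
Hypothesis Hx : is_dual_core_inverse star a x.

Lemma dcinv_inner : a * x * a = a.
Proof. by case: Hx. Qed.

Lemma dcinv_range : exists r, x = star a * r.
Proof. by case: Hx => _ Hr _; apply/Hr; exists 1; rewrite mulr1. Qed.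

Lemma dcinv_xxa : x * x * a = x.
Proof.
case: Hx => _ _ Hl; have [u Eu] : exists u, x = u * a by apply/Hl; exists 1; rewrite mul1r.
by rewrite {1}Eu -(mulrA u) -(mulrA u) dcinv_inner -Eu.
Qed.

Lemma dcinv_star_xa_mul : star (x * a) * x = x.
Proof.
case: Hstar => _ starM _; have [r Er] := dcinv_range.
have Ea : star a = star a * star x * star a by rewrite -{1}dcinv_inner !starM mulrA.
by rewrite starM {2}Er mulrA -Ea -Er.
Qed.

(* xa = (xa)^* (xa), which is self-adjoint. *)
Lemma dcinv_star_xa : star (x * a) = x * a.
Proof.
case: Hstar => starK starM _.
have E : star (x * a) * (x * a) = x * a by rewrite mulrA dcinv_star_xa_mul.
by rewrite -{1}E starM starK E.
Qed.

Lemma dcinv_outer : x * a * x = x.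
Proof. by rewrite -dcinv_star_xa dcinv_star_xa_mul. Qed.

Lemma dcinv_aax : a * a * x = a.
Proof.
case: Hx => _ _ Hl; have [v Ev] : exists v, a = v * x by apply/Hl; exists 1; rewrite mul1r.
by rewrite {1}Ev -(mulrA v) -(mulrA v) dcinv_outer -Ev.
Qed.

End Equations.

Lemma dcinv_of_eqs (s z : R) :
  s * z * s = s -> z * s * z = z -> star (z * s) = z * s ->
  s * s * z = s -> z * z * s = z ->
  is_dual_core_inverse star s z.
Proof.
case: Hstar => starK starM _ Eszs Ezsz Ezs Essz Ezzs; split=> // w; split.
- case=> r ->; exists (star z * z * r).
  by rewrite -{1}Ezsz -Ezs starM !mulrA.
- case=> r ->; exists (s * star s * r).
  have Es : star s = z * s * star s by rewrite -{1}Eszs -mulrA starM Ezs.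
  by rewrite {1}Es !mulrA.
- by case=> r ->; exists (r * z * z); rewrite -{1}Ezzs !mulrA.
- by case=> r ->; exists (r * s * s); rewrite -{1}Essz !mulrA.
Qed.

Section Sum.

Context {a b ad bd : R}.
Hypotheses (Ha : is_dual_core_inverse star a ad)
           (Hb : is_dual_core_inverse star b bd).
Hypotheses (Hab : a * b = 0) (Habs : a * star b = 0).

Lemma adb_eq0 : ad * b = 0.
Proof. by rewrite -(dcinv_xxa Ha) -mulrA Hab mulr0. Qed.

Lemma abd_eq0 : a * bd = 0.
Proof. by have [r ->] := dcinv_range Hb; rewrite mulrA Habs mul0r. Qed.

Lemma bad_eq0 : b * ad = 0.
Proof.
case: Hstar => starK starM _; have [r ->] := dcinv_range Ha.
by rewrite mulrA -{1}(starK b) -starM Habs involution0 mul0r.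
Qed.

Lemma adbd_eq0 : ad * bd = 0.
Proof. by rewrite -(dcinv_xxa Ha) -mulrA abd_eq0 mulr0. Qed.

Lemma bdad_eq0 : bd * ad = 0.
Proof. by rewrite -(dcinv_xxa Hb) -mulrA bad_eq0 mulr0. Qed.

Let api : R := 1 - a * ad.
Let sum_dcinv : R := ad + bd * api.

Lemma mul_api_a : api * a = 0.
Proof. by rewrite mulrBl mul1r dcinv_inner ?subrr. Qed.

Lemma mul_api_b : api * b = b.
Proof. by rewrite mulrBl mul1r -mulrA adb_eq0 mulr0 subr0. Qed.

Lemma mul_api_bd : api * bd = bd.
Proof. by rewrite mulrBl mul1r -mulrA adbd_eq0 mulr0 subr0. Qed.

Lemma sum_dcinv_mul : sum_dcinv * (a + b) = ad * a + bd * b.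
Proof.
rewrite mulrDl (mulrDr ad) (mulrDr (bd * api)) -!mulrA mul_api_a mul_api_b.
by rewrite adb_eq0 mulr0 addr0 add0r.
Qed.

Lemma mul_sum_dcinv : (a + b) * sum_dcinv = a * ad + b * bd * api.
Proof.
rewrite mulrDr !(mulrDl a b) !mulrA abd_eq0 bad_eq0.
by rewrite mul0r addr0 add0r.
Qed.

Lemma dcinv_add : is_dual_core_inverse star (a + b) sum_dcinv.
Proof.
apply: dcinv_of_eqs.
- rewrite -mulrA sum_dcinv_mul mulrDr !(mulrDl a b) !mulrA (dcinv_inner Ha) (dcinv_inner Hb).
  by rewrite abd_eq0 bad_eq0 !mul0r addr0 add0r.
- rewrite sum_dcinv_mul mulrDr !(mulrDl (ad * a) (bd * b)) -!mulrA.
  rewrite bad_eq0 (mulrA a) abd_eq0 mul0r !mulr0 addr0 add0r.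
  by rewrite !mulrA !dcinv_outer.
- by case: Hstar => _ _ starD; rewrite sum_dcinv_mul starD !dcinv_star_xa.
- rewrite -mulrA mul_sum_dcinv mulrDr !(mulrDl a b) !mulrA (dcinv_aax Ha) (dcinv_aax Hb).
  by rewrite Hab !mul0r add0r mulrBr mulr1 mulrA (addrC b) addrA addrK.
- have Ebd_api_ad_a : bd * api * ad * a = - (bd * a * ad).
    rewrite mulrBr mulr1 mulrBl bdad_eq0 sub0r mulNr -!mulrA.
    by rewrite (mulrA ad ad a) (dcinv_xxa Ha) mulrA.
  rewrite -mulrA sum_dcinv_mul mulrDr !(mulrDl ad (bd * api)) !mulrA (dcinv_xxa Ha).
  rewrite Ebd_api_ad_a adbd_eq0 mul0r add0r -(mulrA bd api bd) mul_api_bd (dcinv_xxa Hb).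
  by rewrite /sum_dcinv mulrBr mulr1 mulrA addrAC addrA.
Qed.

End Sum.

End DualCoreInverse.

Theorem theorem4p8 (R : pzRingType) (star : R -> R) (Hstar : is_involution star)
  (a b ad bd : R)
  (Ha : is_dual_core_inverse star a ad) (Hb : is_dual_core_inverse star b bd)
  (Hab : a * b = 0) (Habs : a * star b = 0) :
  is_dual_core_inverse star (a + b) (ad + bd * (1 - a * ad)).
Proof. exact (dcinv_add Hstar Ha Hb Hab Habs). Qed.
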